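(* Let $\bm{\mathcal{X}}\in\mathbb{R}^{n\times r\times k}$, $\bm{\mathcal{U}}_t\in\mathbb{R}^{n\times R\times k}$ and $\bm{\mathcal{U}}_{t+1}=[\bm{\mathcal{I}}+\mu(\mathcal{A}^*\mathcal{A})(\bm{\mathcal{X}}*\bm{\mathcal{X}}^\top-\bm{\mathcal{U}}_t*\bm{\mathcal{U}}_t^\top)]*\bm{\mathcal{U}}_t$. Assume $\|\bm{\mathcal{U}}_t\|\le 3\|\bm{\mathcal{X}}\|$, $\mu\le\frac{1}{27}\|\bm{\mathcal{X}}\|^{-2}$, and $\|(\mathcal{A}^*\mathcal{A}-\mathcal{I})(\bm{\mathcal{X}}*\bm{\mathcal{X}}^\top-\bm{\mathcal{U}}_t*\bm{\mathcal{U}}_t^\top)\|\le\|\bm{\mathcal{X}}\|^2$. Then $\|\bm{\mathcal{U}}_{t+1}\|\le 3\|\bm{\mathcal{X}}\|$.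
   Context: All tensors are real third-order with third mode of length $k$. The t-product $*$ is tube-wise circular convolution: $(\bm{\mathcal{A}}*\bm{\mathcal{B}})(i,i',:)=\sum_p\bm{\mathcal{A}}(i,p,:)\circledast\bm{\mathcal{B}}(p,i',:)$; equivalently, with Fourier slices $\overline{\bm{\mathcal{T}}}^{(j)}(i,i')=\sum_{j'}\bm{\mathcal{T}}(i,i',j')e^{-\sqrt{-1}\,2\pi(j-1)(j'-1)/k}$ and $\overline{\bm{\mathcal{T}}}=\mathrm{blockdiag}(\overline{\bm{\mathcal{T}}}^{(j)})_j$, $\overline{\bm{\mathcal{A}}*\bm{\mathcal{B}}}=\overline{\bm{\mathcal{A}}}\,\overline{\bm{\mathcal{B}}}$. The transpose transposes each frontal slice and reverses slices $2,\dots,k$. $\bm{\mathcal{I}}$ is the identity tensor, $\mathcal{I}$ the identity operator. $\|\bm{\mathcal{T}}\|=\|\overline{\bm{\mathcal{T}}}\|$. $\mathcal{A}^*\mathcal{A}(\bm{\mathcal{Z}})=\sum_i\langle\bm{\mathcal{A}}_i,\bm{\mathcal{Z}}\rangle\bm{\mathcal{A}}_i$ for fixed tubal-symmetric $\bm{\mathcal{A}}_i\in\mathbb{R}^{n\times n\times k}$, with $\langle\cdot,\cdot\rangle$ the entrywise inner product. *)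

From mathcomp Require Import all_boot all_algebra.
From mathcomp Require Import complex.
From mathcomp Require Import all_classical all_reals all_analysis.
Set Implicit Arguments. Unset Strict Implicit. Unset Printing Implicit Defensive.
Import GRing.Theory Num.Theory.
Local Open Scope ring_scope.

Section Tensors.
Variable R : realType.

(* A real third-order tensor of size n x m x k, given by its k frontal
   slices: T j i i' = T(i,i',j) (indices are 0-based). *)
Definition tensor (n m k : nat) := 'I_k -> 'M[R]_(n, m).

Lemma ord_pos (k : nat) (j : 'I_k) : (0 < k)%N.
Proof. exact: leq_ltn_trans (leq0n j) (ltn_ord j). Qed.

Definition circsub (k : nat) (j l : 'I_k) : 'I_k :=
  Ordinal (ltn_pmod (j + k - l) (ord_pos j)).
Definition circneg (k : nat) (j : 'I_k) : 'I_k :=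
  Ordinal (ltn_pmod (k - j) (ord_pos j)).

Definition tprod (n p q k : nat) (A : tensor n p k) (B : tensor p q k)
  : tensor n q k :=
  fun j => \sum_(l < k) A l *m B (circsub j l).

(* transpose: transpose each frontal slice and reverse slices 2..k *)
Definition ttr (n m k : nat) (A : tensor n m k) : tensor m n k :=
  fun j => (A (circneg j))^T.

Definition tid (n k : nat) : tensor n n k :=
  fun j => if nat_of_ord j == 0%N then 1%:M else 0.

Definition tadd (n m k : nat) (A B : tensor n m k) : tensor n m k :=
  fun j => A j + B j.
Definition tsub (n m k : nat) (A B : tensor n m k) : tensor n m k :=
  fun j => A j - B j.
Definition tscale (n m k : nat) (a : R) (A : tensor n m k) : tensor n m k :=
  fun j => a *: A j.

Definition tinner (n m k : nat) (A B : tensor n m k) : R :=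
  \sum_(j < k) \sum_(i < n) \sum_(i' < m) A j i i' * B j i i'.

Definition AstarA (m n k : nat) (As : 'I_m -> tensor n n k)
  (Z : tensor n n k) : tensor n n k :=
  fun j => \sum_(i < m) tinner (As i) Z *: As i j.

Definition tsym (n k : nat) (A : tensor n n k) : Prop := ttr A = A.

(* e^{-sqrt(-1) 2 pi t / k} *)
Definition omega (k t : nat) : R[i] :=
  Complex (cos (2 * pi * t%:R / k%:R)) (- sin (2 * pi * t%:R / k%:R)).

(* Fourier slice  Tbar^(j)(i,i') = sum_j' T(i,i',j') e^{-sqrt(-1) 2pi j j'/k}
   (0-based indices j, j') *)
Definition fslice (n p k : nat) (T : tensor n p k) (j : 'I_k)
  : 'I_n -> 'I_p -> R[i] :=
  fun i i' => \sum_(j' < k) real_complex R (T j' i i') * omega k (j * j').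

(* Tbar = blockdiag(Tbar^(j))_j, as a matrix indexed by ('I_k * 'I_n) x ('I_k * 'I_p) *)
Definition tbar (n p k : nat) (T : tensor n p k)
  : ('I_k * 'I_n)%type -> ('I_k * 'I_p)%type -> R[i] :=
  fun a b => if a.1 == b.1 then fslice T a.1 a.2 b.2 else 0.

Definition cnorm2 (I : finType) (v : I -> R[i]) : R :=
  \sum_(x : I) ((@complex.Re R (v x)) ^+ 2 + (@complex.Im R (v x)) ^+ 2).

Definition opnorm (I J : finType) (M : I -> J -> R[i]) : R :=
  sup [set x : R | exists v : J -> R[i],
         cnorm2 v <= 1 /\ x = Num.sqrt (cnorm2 (fun a => \sum_(b : J) M a b * v b))].

Definition tnorm (n p k : nat) (T : tensor n p k) : R := opnorm (tbar T).

End Tensors.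

(* In the Fourier domain the t-product becomes the product of the block-diagonal
   complex matrices Tbar and the t-transpose becomes the conjugate transpose, so
   ||.|| is an operator norm.  With D = X X^T - U U^T, E = (A^*A - I)(D) and
   x = ||X||, the update reads
     U+ = U (I - mu U^T U) + mu X X^T U + mu E U.
   The first term has norm at most max_(s <= 3x) s (1 - mu s^2) = 3x (1 - 9 mu x^2),
   because s |-> s - mu s^3 increases on [0, 3x] when 27 mu x^2 <= 1; this is proved
   without singular values, from the moments <v, (U^T U)^j v>, j <= 3.  The other
   two terms are at most 3 mu x^3 each, so ||U+|| <= 3x - 21 mu x^3 <= 3x. *)

From mathcomp Require Import all_boot all_algebra.
From mathcomp Require Import complex.
From mathcomp Require Import all_classical all_reals all_analysis.
From mathcomp Require Import ring lra.
Import mathcomp.order.order.Order.TTheory GRing.Theory Num.Theory.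
Local Open Scope ring_scope.
Local Open Scope complex_scope.
Set Implicit Arguments. Unset Strict Implicit. Unset Printing Implicit Defensive.

Lemma sqr_le_mul_of_quadratic_ge0 (R : realFieldType) (a b c : R) : 0 <= c ->
  (forall t, 0 <= a - 2 * t * b + t ^+ 2 * c) -> b ^+ 2 <= a * c.
Proof.
move=> c_ge0; have [-> q_ge0|c_neq0 q_ge0] := eqVneq c 0.
  have [->|b_neq0] := eqVneq b 0; first by rewrite expr0n mulr0.
  have := q_ge0 ((a + 1) / (2 * b)).
  have -> : 2 * ((a + 1) / (2 * b)) * b = a + 1 by field.
  by rewrite mulr0 => ?; lra.
have c_gt0 : 0 < c by rewrite lt0r c_neq0.
have := q_ge0 (b / c).
have -> : a - 2 * (b / c) * b + (b / c) ^+ 2 * c = (a * c - b ^+ 2) / c by field.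
by rewrite pmulr_lge0 ?invr_gt0 // subr_ge0.
Qed.

Lemma scalecE (R : realType) (c z : R[i]) : c *: z = c * z.
Proof. by []. Qed.

Lemma Re_realM (R : realType) (t : R) (z : R[i]) : complex.Re (t%:C * z) = t * complex.Re z.
Proof. by case: z => x y /=; rewrite mul0r subr0. Qed.

Lemma Im_realM (R : realType) (t : R) (z : R[i]) : complex.Im (t%:C * z) = t * complex.Im z.
Proof. by case: z => x y /=; rewrite mul0r addr0. Qed.

Section RealDot.
Variables (R : realType) (I : finType).
Local Notation Re := (@complex.Re R).
Local Notation Im := (@complex.Im R).
Implicit Types (u v w : I -> R[i]) (t : R).

(* The Euclidean inner product of C^I viewed as R^(2|I|), i.e. Re <u, w>. *)
Definition rdot u w : R := \sum_a (Re (u a) * Re (w a) + Im (u a) * Im (w a)).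

Definition vnorm u : R := Num.sqrt (cnorm2 u).

Lemma cnorm2_rdot u : cnorm2 u = rdot u u.
Proof. by apply: eq_bigr => a _; rewrite !expr2. Qed.

Lemma rdot0l w : rdot 0 w = 0.
Proof. by rewrite /rdot big1 // => a _; rewrite !mul0r addr0. Qed.

Lemma rdotC u w : rdot u w = rdot w u.
Proof. by apply: eq_bigr => a _; ring. Qed.

Lemma rdot_ge0 u : 0 <= rdot u u.
Proof. by apply: sumr_ge0 => a _; rewrite -!expr2 addr_ge0 ?sqr_ge0. Qed.

Lemma rdotDl u1 u2 w : rdot (u1 + u2) w = rdot u1 w + rdot u2 w.
Proof. by rewrite -big_split; apply: eq_bigr => a _ /=; rewrite !raddfD /=; ring. Qed.

Lemma rdotNl u w : rdot (- u) w = - rdot u w.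
Proof. by rewrite -sumrN; apply: eq_bigr => a _ /=; rewrite !raddfN /=; ring. Qed.

Lemma rdotZl t u w : rdot (t%:C *: u) w = t * rdot u w.
Proof. by rewrite mulr_sumr; apply: eq_bigr => a _; rewrite /= Re_realM Im_realM; ring. Qed.

Lemma rdotBl u1 u2 w : rdot (u1 - u2) w = rdot u1 w - rdot u2 w.
Proof. by rewrite rdotDl rdotNl. Qed.

Lemma rdotDr u w1 w2 : rdot u (w1 + w2) = rdot u w1 + rdot u w2.
Proof. by rewrite rdotC rdotDl !(rdotC u). Qed.

Lemma rdotBr u w1 w2 : rdot u (w1 - w2) = rdot u w1 - rdot u w2.
Proof. by rewrite rdotC rdotBl !(rdotC u). Qed.

Lemma rdotZr t u w : rdot u (t%:C *: w) = t * rdot u w.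
Proof. by rewrite rdotC rdotZl rdotC. Qed.

Lemma rdot_CauchySchwarz u w : rdot u w ^+ 2 <= rdot u u * rdot w w.
Proof.
apply: sqr_le_mul_of_quadratic_ge0 (rdot_ge0 w) _ => t.
have := rdot_ge0 (u - t%:C *: w).
by rewrite rdotBl !rdotBr !rdotZl !rdotZr (rdotC w u); lra.
Qed.

Lemma vnorm_ge0 u : 0 <= vnorm u. Proof. exact: sqrtr_ge0. Qed.

Lemma sqr_vnorm u : vnorm u ^+ 2 = rdot u u.
Proof. by rewrite sqr_sqrtr cnorm2_rdot ?rdot_ge0. Qed.

Lemma vnorm_le u s : 0 <= s -> rdot u u <= s ^+ 2 -> vnorm u <= s.
Proof. by move=> s_ge0; rewrite -sqr_vnorm ler_pXn2r ?nnegrE ?vnorm_ge0. Qed.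

Lemma rdot_le_vnorm u w : rdot u w <= vnorm u * vnorm w.
Proof.
apply: le_trans (ler_norm _) _.
rewrite -sqrtr_sqr /vnorm !cnorm2_rdot -sqrtrM ?rdot_ge0 //.
by rewrite ler_sqrt ?mulr_ge0 ?rdot_ge0 // rdot_CauchySchwarz.
Qed.

Lemma vnormD u w : vnorm (u + w) <= vnorm u + vnorm w.
Proof.
apply: vnorm_le; first by rewrite addr_ge0 ?vnorm_ge0.
rewrite rdotDl !rdotDr (rdotC w u) sqrrD !sqr_vnorm.
by have := rdot_le_vnorm u w; lra.
Qed.

Lemma vnormZ t u : vnorm (t%:C *: u) = `|t| * vnorm u.
Proof.
by rewrite /vnorm !cnorm2_rdot rdotZl rdotZr mulrA -expr2 sqrtrM ?sqr_ge0 // sqrtr_sqr.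
Qed.

End RealDot.

Section OperatorNorm.
Variables (R : realType) (I J : finType).
Local Notation Re := (@complex.Re R).
Local Notation Im := (@complex.Im R).
Implicit Types (M : I -> J -> R[i]) (u v w : J -> R[i]) (t : R).

Definition mulmv M v : I -> R[i] := fun a => \sum_b M a b * v b.

Lemma mulmvD M u w : mulmv M (u + w) = mulmv M u + mulmv M w.
Proof.
apply/funext => a; rewrite /mulmv !fctE /= -big_split.
by apply: eq_bigr => b _; rewrite mulrDr.
Qed.

Lemma mulmvN M u : mulmv M (- u) = - mulmv M u.
Proof.
apply/funext => a; rewrite /mulmv !fctE /= -sumrN.
by apply: eq_bigr => b _; rewrite mulrN.
Qed.

Lemma mulmvB M u w : mulmv M (u - w) = mulmv M u - mulmv M w.
Proof. by rewrite mulmvD mulmvN. Qed.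

Lemma mulmvZ M t v : mulmv M (t%:C *: v) = t%:C *: mulmv M v.
Proof.
apply/funext => a; rewrite /mulmv !fctE /= scalecE mulr_sumr.
by apply: eq_bigr => b _; rewrite scalecE mulrCA.
Qed.

Lemma mulmv_bounded M :
  exists2 K, 0 <= K & forall v, rdot (mulmv M v) (mulmv M v) <= K * rdot v v.
Proof.
pose re_row a b := (M a b)^*; pose im_row a b := Complex (Im (M a b)) (Re (M a b)).
exists (\sum_a (rdot (re_row a) (re_row a) + rdot (im_row a) (im_row a))).
  by apply: sumr_ge0 => a _; rewrite addr_ge0 ?rdot_ge0.
move=> v; rewrite mulr_suml; apply: ler_sum => a _; rewrite mulrDl.
have -> : Re (mulmv M v a) = rdot (re_row a) v.
  rewrite /mulmv raddf_sum; apply: eq_bigr => b _.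
  by rewrite /re_row; case: (M a b) => x y; case: (v b) => x' y' /=; ring.
have -> : Im (mulmv M v a) = rdot (im_row a) v.
  rewrite /mulmv raddf_sum; apply: eq_bigr => b _.
  by rewrite /im_row; case: (M a b) => x y; case: (v b) => x' y' /=; ring.
by rewrite -!expr2; apply: lerD; apply: rdot_CauchySchwarz.
Qed.

Lemma opnorm_has_sup M :
  has_sup [set x : R | exists v : J -> R[i],
    cnorm2 v <= 1 /\ x = Num.sqrt (cnorm2 (fun a => \sum_(b : J) M a b * v b))].
Proof.
split; first by exists (vnorm (mulmv M 0)), 0; rewrite cnorm2_rdot rdot0l.
have [K K_ge0 hK] := mulmv_bounded M.
exists (Num.sqrt K) => _ [v [v_le1 ->]].
rewrite ler_sqrt // cnorm2_rdot; apply: le_trans (hK v) _.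
by rewrite -cnorm2_rdot ler_piMr.
Qed.

Lemma opnorm_ub M v : cnorm2 v <= 1 -> vnorm (mulmv M v) <= opnorm M.
Proof. by move=> v_le1; apply: (ub_le_sup (opnorm_has_sup M).2); exists v. Qed.

Lemma opnorm_ge0 M : 0 <= opnorm M.
Proof.
apply: le_trans (vnorm_ge0 _) (opnorm_ub M (v := 0) _).
by rewrite cnorm2_rdot rdot0l.
Qed.

Lemma opnorm_mulmv M v : vnorm (mulmv M v) <= opnorm M * vnorm v.
Proof.
have [v0|v_neq0] := eqVneq (vnorm v) 0.
  have [K _ hK] := mulmv_bounded M.
  have := hK v; rewrite -[rdot v v]sqr_vnorm v0 expr0n !mulr0 => Mv_le0.
  by apply: vnorm_le; rewrite // expr0n.
have v_gt0 : 0 < vnorm v by rewrite lt0r v_neq0 vnorm_ge0.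
have unit_v : cnorm2 ((vnorm v)^-1%:C *: v) <= 1.
  by rewrite cnorm2_rdot rdotZl rdotZr mulrA -expr2 -sqr_vnorm exprVn mulVf ?expf_neq0.
have := opnorm_ub M unit_v.
by rewrite mulmvZ vnormZ ger0_norm ?invr_ge0 ?vnorm_ge0 // -ler_pdivrMr // mulrC.
Qed.

Lemma opnorm_le M c :
  0 <= c -> (forall v, vnorm (mulmv M v) <= c * vnorm v) -> opnorm M <= c.
Proof.
move=> c_ge0 hc; apply: ge_sup; first exact: (opnorm_has_sup M).1.
move=> _ [v [v_le1 ->]]; apply: le_trans (hc v) _.
by rewrite ler_piMr // /vnorm -sqrtr1 ler_sqrt.
Qed.

Lemma vnorm_mulmv_le M c d v :
  opnorm M <= c -> vnorm v <= d -> vnorm (mulmv M v) <= c * d.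
Proof.
move=> Mc vd; apply: le_trans (opnorm_mulmv M v) _.
exact: ler_pM (opnorm_ge0 M) (vnorm_ge0 v) Mc vd.
Qed.

End OperatorNorm.

Definition adjoint (R : realType) (I J : finType) (M : I -> J -> R[i]) : J -> I -> R[i] :=
  fun b a => (M a b)^*.

Section Adjoint.
Variables (R : realType) (I J : finType).
Implicit Types (M : I -> J -> R[i]).

Lemma adjointK M : adjoint (adjoint M) = M.
Proof. by apply/funext => a; apply/funext => b; rewrite /adjoint conjcK. Qed.

Lemma rdot_adjoint M z y : rdot (mulmv M z) y = rdot z (mulmv (adjoint M) y).
Proof.
rewrite /rdot /mulmv.
under eq_bigr => a _ do rewrite !raddf_sum mulr_suml mulr_suml -big_split.
rewrite exchange_big /=; apply: eq_bigr => b _.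
rewrite !raddf_sum mulr_sumr mulr_sumr -big_split; apply: eq_bigr => a _ /=.
by rewrite /adjoint; case: (M a b) => x x'; case: (z b) => w w'; case: (y a) => c c' /=; ring.
Qed.

End Adjoint.

Lemma opnorm_adjoint_le (R : realType) (I J : finType) (M : I -> J -> R[i]) :
  opnorm (adjoint M) <= opnorm M.
Proof.
apply: opnorm_le (opnorm_ge0 M) _ => y; set z := mulmv (adjoint M) y.
have z_sqr : vnorm z ^+ 2 <= vnorm y * (opnorm M * vnorm z).
  rewrite sqr_vnorm {2}/z rdot_adjoint adjointK.
  apply: le_trans (rdot_le_vnorm _ _) _.
  by rewrite ler_wpM2l ?vnorm_ge0 // opnorm_mulmv.
have [z0|z_neq0] := eqVneq (vnorm z) 0.
  by rewrite z0 mulr_ge0 ?opnorm_ge0 ?vnorm_ge0.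
have z_gt0 : 0 < vnorm z by rewrite lt0r z_neq0 vnorm_ge0.
by rewrite -(ler_pM2r z_gt0) -expr2 mulrAC mulrC.
Qed.

(* Reading G_j as <v, H^j v> for a self-adjoint 0 <= H <= a, this integrates
     a (1 - mu a)^2 - l (1 - mu l)^2
       = (a - l) [(1 - mu a) (1 - 3 mu a) + mu (2 - 3 mu a) (a - l) + mu^2 (a - l)^2]
   against the spectral measure of H at v. *)
Lemma cubic_moment_bound (R : realFieldType) (a mu V G1 G2 G3 : R) :
  0 <= mu -> 3 * mu * a <= 1 ->
  G1 <= a * V ->
  0 <= a ^+ 2 * V - 2 * a * G1 + G2 ->
  a ^+ 2 * G1 - 2 * a * G2 + G3 <= a * (a ^+ 2 * V - 2 * a * G1 + G2) ->
  G1 - 2 * mu * G2 + mu ^+ 2 * G3 <= a * (1 - mu * a) ^+ 2 * V.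
Proof.
move=> mu_ge0 mu_a G1_le G2_ge G3_le.
have h1 : 0 <= (1 - mu * a) * (1 - 3 * mu * a) * (a * V - G1).
  by rewrite !mulr_ge0 // subr_ge0 //; lra.
have h2 : 0 <= mu * (2 - 3 * mu * a) * (a ^+ 2 * V - 2 * a * G1 + G2).
  by rewrite !mulr_ge0 //; lra.
have h3 : 0 <= mu ^+ 2 * (a * (a ^+ 2 * V - 2 * a * G1 + G2)
                         - (a ^+ 2 * G1 - 2 * a * G2 + G3)).
  by rewrite mulr_ge0 ?sqr_ge0 // subr_ge0.
lra.
Qed.

Lemma opnorm_cubic_step (R : realType) (I J : finType) (U : I -> J -> R[i]) (mu s : R)
    (v : J -> R[i]) :
  0 <= mu -> opnorm U <= s -> 3 * mu * s ^+ 2 <= 1 ->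
  vnorm (mulmv U (v - mu%:C *: mulmv (adjoint U) (mulmv U v)))
    <= s * (1 - mu * s ^+ 2) * vnorm v.
Proof.
move=> mu_ge0 U_le mu_s.
have s_ge0 : 0 <= s := le_trans (opnorm_ge0 U) U_le.
pose H z := mulmv (adjoint U) (mulmv U z).
have gram z : rdot (mulmv U z) (mulmv U z) = rdot z (H z) by rewrite rdot_adjoint.
have H_sym z w : rdot z (H w) = rdot (H z) w.
  by rewrite -rdot_adjoint rdotC rdot_adjoint rdotC.
have H_le z : rdot z (H z) <= s ^+ 2 * rdot z z.
  rewrite -gram -!sqr_vnorm -exprMn ler_pXn2r ?nnegrE ?mulr_ge0 ?vnorm_ge0 //.
  exact: le_trans (opnorm_mulmv U z) (ler_wpM2r (vnorm_ge0 z) U_le).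
have HB z w : H (z - w) = H z - H w by rewrite /H !mulmvB.
have HZ t z : H (t%:C *: z) = t%:C *: H z by rewrite /H !mulmvZ.
set g := H v; set h := H g; set a := s ^+ 2 in mu_s H_le *.
have Hw : H (v - mu%:C *: g) = g - mu%:C *: h by rewrite HB HZ.
have Hp : H (a%:C *: v - g) = a%:C *: g - h by rewrite HB HZ.
have vh : rdot v h = rdot g g by rewrite /h H_sym.
have G1_le : rdot v g <= a * rdot v v := H_le v.
have G2_ge : 0 <= a ^+ 2 * rdot v v - 2 * a * rdot v g + rdot g g.
  have := rdot_ge0 (a%:C *: v - g).
  by rewrite !rdotBl !rdotBr !rdotZl !rdotZr (rdotC g v) => ?; lra.
have G3_le : a ^+ 2 * rdot v g - 2 * a * rdot g g + rdot g h
             <= a * (a ^+ 2 * rdot v v - 2 * a * rdot v g + rdot g g).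
  have := H_le (a%:C *: v - g).
  by rewrite Hp !rdotBl !rdotBr !rdotZl !rdotZr vh (rdotC g v) => ?; lra.
apply: vnorm_le; first by rewrite !mulr_ge0 ?vnorm_ge0 // subr_ge0; lra.
have -> : (s * (1 - mu * a) * vnorm v) ^+ 2 = a * (1 - mu * a) ^+ 2 * rdot v v.
  by rewrite -sqr_vnorm /a; ring.
have := cubic_moment_bound mu_ge0 mu_s G1_le G2_ge G3_le.
by rewrite gram Hw !rdotBl !rdotBr !rdotZl !rdotZr vh => ?; lra.
Qed.

Lemma opnorm_update_le (R : realType) (K K' L : finType) (X : K -> K' -> R[i])
    (U W : K -> L -> R[i]) (E : K -> K -> R[i]) (mu : R) :
  0 <= mu -> opnorm U <= 3 * opnorm X -> 27 * mu * opnorm X ^+ 2 <= 1 ->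
  opnorm E <= opnorm X ^+ 2 ->
  (forall v, mulmv W v = mulmv U (v - mu%:C *: mulmv (adjoint U) (mulmv U v))
                         + mu%:C *: mulmv X (mulmv (adjoint X) (mulmv U v))
                         + mu%:C *: mulmv E (mulmv U v)) ->
  opnorm W <= 3 * opnorm X.
Proof.
set x := opnorm X => mu_ge0 U_le mu_x E_le W_eq.
have x_ge0 : 0 <= x := opnorm_ge0 X.
apply: opnorm_le; first by rewrite mulr_ge0.
move=> v; rewrite W_eq.
have Uv_le := vnorm_mulmv_le U_le (lexx (vnorm v)).
have XXUv_le := vnorm_mulmv_le (lexx x)
  (vnorm_mulmv_le (opnorm_adjoint_le X) Uv_le).
have EUv_le := vnorm_mulmv_le E_le Uv_le.
have mu_3x : 3 * mu * (3 * x) ^+ 2 <= 1.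
  by have -> : 3 * mu * (3 * x) ^+ 2 = 27 * mu * x ^+ 2 by ring.
have step_le := opnorm_cubic_step v mu_ge0 U_le mu_3x.
apply: le_trans (vnormD _ _) _; apply: le_trans (lerD (vnormD _ _) (lexx _)) _.
rewrite !vnormZ ger0_norm //.
have := ler_wpM2l mu_ge0 XXUv_le; have := ler_wpM2l mu_ge0 EUv_le.
have : 0 <= mu * x ^+ 3 * vnorm v by rewrite !mulr_ge0 ?exprn_ge0 ?vnorm_ge0.
rewrite -/x; lra.
Qed.

Section Fourier.
Variable R : realType.

Lemma omegaD k s t : omega R k (s + t) = omega R k s * omega R k t.
Proof.
rewrite /omega /=; congr Complex; rewrite natrD mulrDr mulrDl ?cosD ?sinD; ring.
Qed.

Lemma omega0 k : omega R k 0 = 1.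
Proof. by rewrite /omega mulr0 mul0r cos0 sin0 oppr0. Qed.

Lemma omega_conjM k t : (omega R k t)^* * omega R k t = 1.
Proof.
rewrite /omega /=; have cs := cos2Dsin2 (2 * pi * t%:R / k%:R : R).
by congr Complex; [rewrite -[RHS]cs|]; ring.
Qed.

Section Period.
Variable k : nat.
Hypothesis k_gt0 : (0 < k)%N.

Lemma omega_mulk q : omega R k (q * k) = 1.
Proof.
elim: q => [|q IHq]; first by rewrite mul0n omega0.
rewrite mulSn omegaD IHq mulr1 /omega.
have -> : 2 * pi * k%:R / k%:R = pi *+ 2 :> R.
  by rewrite mulfK ?pnatr_eq0 -?lt0n // mulr_natl.
by rewrite cos2pi sin2pi oppr0.
Qed.

Lemma omega_mod t : omega R k t = omega R k (t %% k).
Proof. by rewrite {1}(divn_eq t k) omegaD omega_mulk mul1r. Qed.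

End Period.

Definition circadd (k : nat) (l l' : 'I_k) : 'I_k :=
  Ordinal (ltn_pmod (l + l') (ord_pos l)).

Lemma circsub_circadd k (l l' : 'I_k) : circsub (circadd l l') l = l'.
Proof.
apply: val_inj => /=; have lk := ltn_ord l.
rewrite -addnBA ?(ltnW lk) // modnDml.
have -> : (l + l' + (k - l) = l' + k)%N by rewrite addnAC subnKC ?(ltnW lk) // addnC.
by rewrite modnDr modn_small.
Qed.

Lemma circadd_inj k (l : 'I_k) : injective (circadd l).
Proof.
move=> l1 l2 /(congr1 val) /= /eqP.
by rewrite eqn_modDl !modn_small // => /eqP /val_inj.
Qed.

Lemma circnegK k : involutive (@circneg k).
Proof.
move=> [[|m] lk]; apply: val_inj => /=; first by rewrite subn0 modnn subn0 modnn.
have km_lt : (k - m.+1 < k)%N by rewrite ltn_subrL (ltn_trans (ltn0Sn m) lk).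
by rewrite (modn_small km_lt) subKn ?(ltnW lk) // modn_small.
Qed.

Lemma omega_circadd k (j l l' : 'I_k) :
  omega R k (j * circadd l l') = omega R k (j * l) * omega R k (j * l').
Proof.
have k_gt0 := ord_pos j.
by rewrite (omega_mod k_gt0) /= modnMmr -(omega_mod k_gt0) mulnDr omegaD.
Qed.

Lemma omega_circneg k (j l : 'I_k) : omega R k (j * circneg l) = (omega R k (j * l))^*.
Proof.
have k_gt0 := ord_pos j.
rewrite (omega_mod k_gt0) /= modnMmr -(omega_mod k_gt0).
have inv : omega R k (j * (k - l)) * omega R k (j * l) = 1.
  by rewrite -omegaD -mulnDr subnK ?(ltnW (ltn_ord l)) // (omega_mulk k_gt0).
have omega_neq0 : omega R k (j * l) != 0.
  by apply: contra_eq_neq inv => ->; rewrite mulr0 eq_sym oner_neq0.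
by apply: (mulIf omega_neq0); rewrite inv omega_conjM.
Qed.

End Fourier.

Section TensorFourier.
Variable R : realType.

Lemma fslice_tprod n p q k (A : tensor R n p k) (B : tensor R p q k) j i i' :
  fslice (tprod A B) j i i' = \sum_(c < p) fslice A j i c * fslice B j c i'.
Proof.
rewrite /fslice /tprod.
under eq_bigr => j' _ do rewrite summxE rmorph_sum mulr_suml.
rewrite exchange_big /=.
under eq_bigr => l _ do rewrite (reindex_inj (@circadd_inj k l)) /=.
under eq_bigr => l _ do under eq_bigr => l' _ do
  rewrite circsub_circadd omega_circadd mxE rmorph_sum mulr_suml.
under eq_bigr => l _ do rewrite exchange_big /=.
rewrite exchange_big /=; apply: eq_bigr => c _.
rewrite mulr_suml; apply: eq_bigr => l _.
by rewrite mulr_sumr; apply: eq_bigr => l' _; rewrite rmorphM; ring.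
Qed.

Lemma fslice_ttr n m k (A : tensor R n m k) j i i' :
  fslice (ttr A) j i i' = (fslice A j i' i)^*.
Proof.
rewrite /fslice /ttr (reindex_inj (inv_inj (@circnegK k))) /= rmorph_sum.
apply: eq_bigr => l _; rewrite circnegK mxE omega_circneg rmorphM.
by congr (_ * _); apply/esym/conjc_real.
Qed.

Lemma fslice_tadd n m k (A B : tensor R n m k) j i i' :
  fslice (tadd A B) j i i' = fslice A j i i' + fslice B j i i'.
Proof. by rewrite /fslice -big_split; apply: eq_bigr => l _; rewrite mxE raddfD mulrDl. Qed.

Lemma fslice_tsub n m k (A B : tensor R n m k) j i i' :
  fslice (tsub A B) j i i' = fslice A j i i' - fslice B j i i'.
Proof. by rewrite /fslice -sumrB; apply: eq_bigr => l _; rewrite !mxE raddfB mulrBl. Qed.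

Lemma fslice_tscale n m k a (A : tensor R n m k) j i i' :
  fslice (tscale a A) j i i' = a%:C * fslice A j i i'.
Proof. by rewrite /fslice mulr_sumr; apply: eq_bigr => l _; rewrite mxE rmorphM mulrA. Qed.

Lemma fslice_tid n k j (i i' : 'I_n) : fslice (@tid R n k) j i i' = (i == i')%:R.
Proof.
rewrite /fslice (bigD1 (Ordinal (ord_pos j))) //= big1 ?addr0.
  by rewrite /tid /= mxE muln0 omega0 mulr1 rmorph_nat.
move=> l l_neq0; rewrite /tid ifF ?mxE ?rmorph0 ?mul0r //.
by apply: contraNF l_neq0 => /eqP l0; apply/eqP/val_inj.
Qed.

Lemma mulmv_tbar n p k (T : tensor R n p k) (v : 'I_k * 'I_p -> R[i]) a :
  mulmv (tbar T) v a = \sum_(c < p) fslice T a.1 a.2 c * v (a.1, c).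
Proof.
rewrite /mulmv (_ : \sum_b _ = \sum_l \sum_c tbar T a (l, c) * v (l, c)); last first.
  by rewrite pair_bigA; apply: eq_bigr => -[].
rewrite /tbar (bigD1 a.1) //= [X in _ + X]big1 ?addr0.
  by apply: eq_bigr => c _; rewrite eqxx.
by move=> l l_neq; apply: big1 => c _; rewrite eq_sym (negbTE l_neq) mul0r.
Qed.

Lemma mulmv_tbar_tprod n p q k (A : tensor R n p k) (B : tensor R p q k) v :
  mulmv (tbar (tprod A B)) v = mulmv (tbar A) (mulmv (tbar B) v).
Proof.
apply/funext => a; rewrite !mulmv_tbar.
under eq_bigr => c _ do rewrite fslice_tprod mulr_suml.
rewrite exchange_big /=; apply: eq_bigr => c _.
by rewrite mulmv_tbar /= mulr_sumr; apply: eq_bigr => c' _; rewrite mulrA.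
Qed.

Lemma tbar_ttr n m k (A : tensor R n m k) : tbar (ttr A) = adjoint (tbar A).
Proof.
apply/funext => a; apply/funext => b; rewrite /tbar /adjoint eq_sym.
by case: eqP => [->|_]; rewrite ?fslice_ttr ?conjc0.
Qed.

Lemma mulmv_tbar_tadd n m k (A B : tensor R n m k) v :
  mulmv (tbar (tadd A B)) v = mulmv (tbar A) v + mulmv (tbar B) v.
Proof.
apply/funext => a; rewrite fctE /= !mulmv_tbar -big_split.
by apply: eq_bigr => c _; rewrite fslice_tadd mulrDl.
Qed.

Lemma mulmv_tbar_tsub n m k (A B : tensor R n m k) v :
  mulmv (tbar (tsub A B)) v = mulmv (tbar A) v - mulmv (tbar B) v.
Proof.
apply/funext => a; rewrite !fctE /= !mulmv_tbar -sumrB.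
by apply: eq_bigr => c _; rewrite fslice_tsub mulrBl.
Qed.

Lemma mulmv_tbar_tscale n m k t (A : tensor R n m k) v :
  mulmv (tbar (tscale t A)) v = t%:C *: mulmv (tbar A) v.
Proof.
apply/funext => a; rewrite !fctE /= scalecE !mulmv_tbar mulr_sumr.
by apply: eq_bigr => c _; rewrite fslice_tscale mulrA.
Qed.

Lemma mulmv_tbar_tid n k v : mulmv (tbar (@tid R n k)) v = v.
Proof.
apply/funext => a; rewrite mulmv_tbar (bigD1 a.2) //= big1 ?addr0.
  by rewrite fslice_tid eqxx mul1r; case: a.
by move=> c c_neq; rewrite fslice_tid eq_sym (negbTE c_neq) mul0r.
Qed.

End TensorFourier.

Theorem lemma16 (R : realType) (n r p k m : nat)
  (As : 'I_m -> tensor R n n k) (X : tensor R n r k)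
  (Ut Ut1 : tensor R n p k) (mu : R) :
  (forall i, tsym (As i)) ->
  Ut1 = tprod (tadd (@tid R n k)
                    (tscale mu (AstarA As (tsub (tprod X (ttr X)) (tprod Ut (ttr Ut))))))
              Ut ->
  0 < mu ->
  tnorm Ut <= 3 * tnorm X ->
  mu <= 27^-1 * (tnorm X) ^- 2 ->
  tnorm (tsub (AstarA As (tsub (tprod X (ttr X)) (tprod Ut (ttr Ut))))
              (tsub (tprod X (ttr X)) (tprod Ut (ttr Ut)))) <= (tnorm X) ^+ 2 ->
  tnorm Ut1 <= 3 * tnorm X.
Proof.
move=> _ -> mu_gt0 U_le mu_le E_le.
set D := tsub (tprod X (ttr X)) (tprod Ut (ttr Ut)).
set AD := AstarA As D.
have mu_x : 27 * mu * tnorm X ^+ 2 <= 1.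
  have [->|x_neq0] := eqVneq (tnorm X) 0; first by rewrite expr0n mulr0 ler01.
  have c_gt0 : 0 < 27 * tnorm X ^+ 2 by rewrite mulr_gt0 // exprn_even_gt0.
  move: mu_le; rewrite -(ler_pM2r c_gt0) (_ : _ * _ * (_ * _) = 1); last first.
    by field; rewrite x_neq0.
  by rewrite mulrA (mulrC mu).
apply: (opnorm_update_le (ltW mu_gt0) U_le mu_x E_le) => v.
have AD_eq y : mulmv (tbar AD) y = mulmv (tbar (tsub AD D)) y + mulmv (tbar D) y.
  by rewrite mulmv_tbar_tsub subrK.
have D_eq y : mulmv (tbar D) y = mulmv (tbar X) (mulmv (adjoint (tbar X)) y)
                                - mulmv (tbar Ut) (mulmv (adjoint (tbar Ut)) y).
  by rewrite mulmv_tbar_tsub !mulmv_tbar_tprod !tbar_ttr.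
rewrite mulmv_tbar_tprod mulmv_tbar_tadd mulmv_tbar_tid mulmv_tbar_tscale.
rewrite AD_eq D_eq mulmvB mulmvZ.
by apply/funext => a; rewrite !fctE /= !scalecE; ring.
Qed.
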